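(* Let $k\ge 1$ be an integer with $4\nmid k$ such that $\mathcal{D}:=(k^2+4)/\gcd(2,k)^2$ is squarefree, let $\alpha=\frac{k+\sqrt{k^2+4}}{2}$, $\beta=\frac{k-\sqrt{k^2+4}}{2}$, let $p\ge 3$ be a prime and $\mathcal{F}_p(x)=x^{2p}-kx^p-1$. Then $\mathcal{F}_p(\beta)\equiv 0 \pmod{p^2}$ if and only if $\mathcal{F}_p(\alpha)\equiv 0\pmod{p^2}$.
   Context: Congruences are taken in the ring of algebraic integers of $\mathbb{Q}(\sqrt{k^2+4})$: $x\equiv y\pmod{m}$ means $(x-y)/m$ is an algebraic integer. *)

From mathcomp Require Import all_boot all_order all_algebra all_field.
Set Implicit Arguments. Unset Strict Implicit. Unset Printing Implicit Defensive.
Import GRing.Theory Num.Theory.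
Local Open Scope ring_scope.

Definition squarefree (n : nat) : Prop :=
  forall d : nat, (1 < d)%N -> ~~ (d * d %| n)%N.

Definition Fp (k p : nat) (x : algC) : algC :=
  x ^+ (2 * p) - k%:R * x ^+ p - 1.

Definition alphak (k : nat) : algC := (k%:R + sqrtC ((k ^ 2 + 4)%N)%:R) / 2.
Definition betak (k : nat) : algC := (k%:R - sqrtC ((k ^ 2 + 4)%N)%:R) / 2.

From mathcomp Require Import all_boot all_order all_algebra all_field.
From mathcomp Require Import ring.
Set Implicit Arguments. Unset Strict Implicit. Unset Printing Implicit Defensive.
Import GRing.Theory Num.Theory.
Local Open Scope ring_scope.

(* alpha and beta are the roots of X^2 - kX - 1, so they are algebraic integers
   with alpha * beta = -1.  For odd p and x * y = -1, dividing F_p(x) by x^(2p)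
   gives F_p(y) = - y^(2p) F_p(x); hence each of F_p(alpha), F_p(beta) is an
   algebraic-integer multiple of the other, and any congruence modulo p^2
   transfers. *)

Lemma Aint_quadratic_root (a b x : algC) :
  a \in Num.int -> b \in Num.int -> x ^+ 2 = a * x + b -> x \in Aint.
Proof.
move=> Za Zb x2.
apply: (@root_monic_Aint (('X - a%:P) * 'X - b%:P)).
- by rewrite rootE !hornerE mulrBl -expr2 x2; apply/eqP; ring.
- rewrite monicE lead_coefDl ?lead_coefMX ?lead_coefXsubC //.
  rewrite size_mulX ?size_XsubC ?polyXsubC_eq0 // size_polyN size_polyC.
  by case: (b != 0).
- apply/polyOverP => i; rewrite coefB coefMX coefB coefX !coefC.
  by case: i => [|[|i]] /=; rewrite ?subr0 ?sub0r ?rpredN.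
Qed.

Section HalfSumOfSquareRoot.

Variables c s : algC.
Hypothesis s2 : s ^+ 2 = c ^+ 2 + 4.

Lemma sqr_half_add_sqrt : ((c + s) / 2) ^+ 2 = c * ((c + s) / 2) + 1.
Proof.
have -> : c * ((c + s) / 2) + 1 = (c ^+ 2 + 2 * c * s + (c ^+ 2 + 4)) / 4.
  by field; rewrite ?pnatr_eq0.
by rewrite -s2; field; rewrite ?pnatr_eq0.
Qed.

Lemma half_add_mul_half_sub_sqrt : (c + s) / 2 * ((c - s) / 2) = -1.
Proof.
have -> : (c + s) / 2 * ((c - s) / 2) = (c ^+ 2 - s ^+ 2) / 4.
  by field; rewrite ?pnatr_eq0.
by rewrite s2; field; rewrite ?pnatr_eq0.
Qed.

End HalfSumOfSquareRoot.

Lemma sqr_sqrtC_k2_4 (k : nat) :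
  sqrtC ((k ^ 2 + 4)%N)%:R ^+ 2 = k%:R ^+ 2 + 4 :> algC.
Proof. by rewrite sqrtCK natrD natrX. Qed.

Lemma alphak_sqr (k : nat) : alphak k ^+ 2 = k%:R * alphak k + 1.
Proof. exact/sqr_half_add_sqrt/sqr_sqrtC_k2_4. Qed.

Lemma betak_sqr (k : nat) : betak k ^+ 2 = k%:R * betak k + 1.
Proof. by apply: sqr_half_add_sqrt; rewrite sqrrN sqr_sqrtC_k2_4. Qed.

Lemma alphak_mul_betak (k : nat) : alphak k * betak k = -1.
Proof. exact/half_add_mul_half_sub_sqrt/sqr_sqrtC_k2_4. Qed.

Lemma alphak_Aint (k : nat) : alphak k \in Aint.
Proof. by apply: Aint_quadratic_root (alphak_sqr k); rewrite ?rpred_nat. Qed.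

Lemma betak_Aint (k : nat) : betak k \in Aint.
Proof. by apply: Aint_quadratic_root (betak_sqr k); rewrite ?rpred_nat. Qed.

Lemma Fp_reciprocal (k p : nat) (x y : algC) :
  odd p -> x * y = -1 -> Fp k p y = - y ^+ (2 * p) * Fp k p x.
Proof.
move=> odd_p xy; rewrite /Fp !(mulnC 2) !exprM.
have : x ^+ p * y ^+ p = -1 by rewrite -exprMn xy -signr_odd odd_p expr1.
move: (x ^+ p) (y ^+ p) => u v uv.
have -> : - v ^+ 2 * (u ^+ 2 - k%:R * u - 1)
          = - (u * v) ^+ 2 + k%:R * v * (u * v) + v ^+ 2 by ring.
by rewrite uv; ring.
Qed.

Lemma Fp_eqAmod0_reciprocal (k p : nat) (e : Algebraics.divisor) (x y : algC) :
  odd p -> y \in Aint -> x * y = -1 ->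
  (Fp k p x == 0 %[mod e])%A -> (Fp k p y == 0 %[mod e])%A.
Proof.
move=> odd_p Ay xy Fx0; rewrite (Fp_reciprocal k odd_p xy).
by rewrite -(mulr0 (- y ^+ (2 * p))) (eqAmodMl _ Fx0) // rpredN rpredX.
Qed.

Theorem lemma3p3 (k p : nat) :
  (1 <= k)%N -> ~~ (4 %| k)%N ->
  squarefree ((k ^ 2 + 4) %/ (gcdn 2 k) ^ 2)%N ->
  prime p -> (3 <= p)%N ->
  ((Fp k p (betak k) == 0 %[mod (p ^ 2)%N%:R])%A <->
   (Fp k p (alphak k) == 0 %[mod (p ^ 2)%N%:R])%A).
Proof.
move=> _ _ _ p_prime p_ge3.
have odd_p : odd p by case: (even_prime p_prime) => // p2; rewrite p2 in p_ge3.
have ba : betak k * alphak k = -1 by rewrite mulrC alphak_mul_betak.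
split.
- exact: Fp_eqAmod0_reciprocal odd_p (alphak_Aint k) ba.
- exact: Fp_eqAmod0_reciprocal odd_p (betak_Aint k) (alphak_mul_betak k).
Qed.
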